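(* Let $m, E, D, A_c, A, L, d, \varepsilon_0$ be positive constants and $V_{DC}\ge 0$. Consider the initial value problem \[ m\ddot{x}+EA_c\frac{x}{L}-DA_c\left|\frac{x}{L}\right|\frac{x}{L}=\frac{\varepsilon_0 A V_{DC}^2}{2(d-x)^2},\qquad x(0)=0,\quad \dot{x}(0)=0, \] with $x<d$. Let $\alpha=\frac{Dd}{EL}$, $\mu=\sqrt{4\alpha^2-6\alpha+9}$ and \[ \kappa(\alpha)=\frac{(2\alpha+3-\mu)(-4\alpha^2+24\alpha-9+2\alpha\mu+3\mu)}{648\alpha^2}. \] Then the pull-in voltage of this model is \[ V_{pull-in}=\sqrt{\frac{2E A_c d^3\kappa(\alpha)}{\varepsilon_0 A L}}. \]
   Context: The equation models a plate of mass $m$ and area $A$ attached to a graphene strip of length $L$ and cross-sectional area $A_c$ (Young's modulus $E$, second-order elastic stiffness constant $D$), actuated by a DC voltage $V_{DC}$ across a gap $d$ to a fixed parallel substrate plate, with electric permittivity constant $\varepsilon_0$; $x$ is the displacement of the plate toward the substrate. ''Pull-in'' means that the solution $x(t)$ reaches $x=d$ (the plate touches the substrate) in finite time. The pull-in voltage is the threshold value of $V_{DC}$ such that the initial value problem has a periodic solution if $V_{DC}\le V_{pull-in}$ and pull-in occurs if $V_{DC}> V_{pull-in}$. *)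

From Stdlib Require Import Reals.
From Coquelicot Require Import Coquelicot.
Open Scope R_scope.

Definition ode_at (m E D Ac A L d eps0 V : R) (x v a : R -> R) (t : R) : Prop :=
  x t < d /\ is_derive x t (v t) /\ is_derive v t (a t) /\
  m * a t + E * Ac * (x t / L) - D * Ac * Rabs (x t / L) * (x t / L)
    = eps0 * A * V ^ 2 / (2 * (d - x t) ^ 2).

Definition ivp_solution_on (m E D Ac A L d eps0 V : R) (lo hi : Rbar)
  (x : R -> R) : Prop :=
  x 0 = 0 /\
  exists v a : R -> R, v 0 = 0 /\
    forall t : R, Rbar_lt lo (Finite t) -> Rbar_lt (Finite t) hi ->
      ode_at m E D Ac A L d eps0 V x v a t.

Definition global_solution (m E D Ac A L d eps0 V : R) (x : R -> R) : Prop :=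
  ivp_solution_on m E D Ac A L d eps0 V m_infty p_infty x.

Definition periodic_solution (m E D Ac A L d eps0 V : R) (x : R -> R) : Prop :=
  global_solution m E D Ac A L d eps0 V x /\
  exists p : R, 0 < p /\ forall t : R, x (t + p) = x t.

Definition pull_in (m E D Ac A L d eps0 V : R) : Prop :=
  exists (lo T : R) (x : R -> R), lo < 0 < T /\
    ivp_solution_on m E D Ac A L d eps0 V (Finite lo) (Finite T) x /\
    filterlim x (at_left T) (locally d).

Definition alpha_par (E D L d : R) : R := D * d / (E * L).

Definition kappa (al : R) : R :=
  let mu := sqrt (4 * al ^ 2 - 6 * al + 9) in
  (2 * al + 3 - mu) * (- 4 * al ^ 2 + 24 * al - 9 + 2 * al * mu + 3 * mu)
    / (648 * al ^ 2).

Definition V_pull_in (m E D Ac A L d eps0 : R) : R :=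
  sqrt (2 * E * Ac * d ^ 3 * kappa (alpha_par E D L d) / (eps0 * A * L)).

From Stdlib Require Import Reals Lra Psatz Ranalysis5 ClassicalEpsilon.
From Coquelicot Require Import Coquelicot.
Open Scope R_scope.

(* In the variables [y = x / d], [alpha = D d / (E L)], [beta = eps0 A V^2 L / (E Ac d^3)]
   and [w^2 = E Ac / (m L)] the equation reads [y'' = w^2 accel(y)], with energy integral
   [(y')^2 = w^2 y (beta - barrier(y)) / (1 - y)],  [barrier(y) = (1 - y) (y - 2 alpha y^2 / 3)].
   On [[0, 1]] the barrier rises to its maximum [2 kappa(alpha)] at [y_crit] and falls back
   to [0] at [1], and [beta = 2 kappa(alpha)] exactly when [V = V_pull-in].  Below that level
   the plate turns back at the first root [y1] of [barrier = beta] and oscillates on [[0, y1]];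
   at that level it creeps up to the unstable equilibrium [y_crit] forever; above it nothing
   stops it before [y = 1], which it reaches in finite time.  Each of the three motions is
   written explicitly in a phase variable ([y1 (1 - cos th) / 2], [y_crit tanh^2 u],
   [sin^2 p]) in which the energy integral becomes a smooth equation, and the time is the
   inverse of the clock [t(th) = int_0^th k]. *)

(** * Clocks and their inverses *)

Lemma strictly_increasing_on (f df : R -> R) (a b : R) :
  (forall s, is_derive f s (df s)) -> (forall s, a < s < b -> 0 < df s) ->
  forall x y, a <= x -> x < y -> y <= b -> f x < f y.
Proof.
  intros Hf Hdf x y hx hxy hy.
  destruct (MVT_cor2 f df x y hxy) as [c [Hc hc]].
  { intros c _. now apply is_derive_Reals. }
  assert (0 < df c) by (apply Hdf; lra).
  assert (0 < df c * (y - x)) by (apply Rmult_lt_0_compat; lra). lra.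
Qed.

Lemma continuity_of_derive (f df : R -> R) :
  (forall s, is_derive f s (df s)) -> continuity f.
Proof. intros Hf s. apply derivable_continuous_pt. exists (df s). now apply is_derive_Reals. Qed.

Section IncreasingInverse.
Variables (f df g : R -> R) (a b : R).
Hypothesis f_deriv : forall s, is_derive f s (df s).
Hypothesis df_pos : forall s, a < s < b -> 0 < df s.
Hypothesis g_inv : forall s, f a <= s <= f b -> a <= g s <= b /\ f (g s) = s.

Let f_incr := strictly_increasing_on f df a b f_deriv df_pos.

Lemma inverse_interior t : f a < t < f b -> a < g t < b.
Proof.
  intro ht. destruct (g_inv t ltac:(lra)) as [[h1 h2] e].
  split; [destruct h1 as [h1|h1] | destruct h2 as [h2|h2]]; subst; lra.
Qed.

Lemma is_derive_inverse t : f a < t < f b -> is_derive g t (/ df (g t)).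
Proof.
  intro ht. assert (hgt := inverse_interior t ht).
  assert (hab : a < b) by lra.
  assert (Hder : forall s, derivable_pt f s).
  { intro s. exists (df s). now apply is_derive_Reals. }
  assert (Hga : g (f a) = a).
  { destruct (g_inv (f a)) as [h e]; [split; [lra | left; apply f_incr; lra]|].
    destruct (Rtotal_order (g (f a)) a) as [h'|[h'|h']]; try lra.
    assert (f a < f (g (f a))) by (apply f_incr; lra). lra. }
  assert (Hgb : g (f b) = b).
  { destruct (g_inv (f b)) as [h e]; [split; [left; apply f_incr; lra | lra]|].
    destruct (Rtotal_order (g (f b)) b) as [h'|[h'|h']]; try lra.
    assert (f (g (f b)) < f b) by (apply f_incr; lra). lra. }
  assert (Hcont : continuity_pt g t).
  { apply (continuity_pt_recip_interv f g a b hab f_incr).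
    - intros x h1 h2. unfold comp, id. apply g_inv. lra.
    - intros x h1 h2. apply g_inv. lra.
    - intros s _. apply derivable_continuous_pt, Hder.
    - exact ht. }
  assert (Hrange : g (f a) <= g t <= g (f b)) by (rewrite Hga, Hgb; lra).
  pose (Prf := fun (s : R) (_ : g (f a) <= s <= g (f b)) => Hder s).
  assert (H := derivable_pt_lim_recip_interv f g (f a) (f b) t Prf Hcont
                 ltac:(apply f_incr; lra) ht Hrange).
  assert (Edf : derive_pt f (g t) (Prf (g t) Hrange) = df (g t)).
  { apply derive_pt_eq_0. now apply is_derive_Reals. }
  rewrite Edf in H. apply is_derive_Reals.
  assert (0 < df (g t)) by (apply df_pos; lra).
  replace (/ df (g t)) with (1 / df (g t)) by (field; lra).
  apply H.
  - intros x hx. unfold comp, id. apply g_inv. lra.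
  - lra.
Qed.

Lemma inverse_at_left : a < b -> filterlim g (at_left (f b)) (locally b).
Proof.
  intros hab P [eps HP].
  set (p0 := Rmax a (b - eps / 2)).
  assert (hp0 : a <= p0 < b) by (split; [apply Rmax_l | apply Rmax_lub_lt; destruct eps; simpl; lra]).
  assert (hp0' : b - eps / 2 <= p0) by apply Rmax_r.
  assert (hfp0 : f p0 < f b) by (apply f_incr; lra).
  assert (hfa : f a <= f p0) by (destruct (Req_dec a p0) as [e|h]; [rewrite e; lra | left; apply f_incr; lra]).
  exists (mkposreal (f b - f p0) ltac:(lra)). intros t Ht htb.
  apply Rabs_def2 in Ht. unfold minus, plus, opp in Ht; simpl in Ht.
  destruct (g_inv t ltac:(lra)) as [[hga hgb] e].
  assert (p0 < g t).
  { destruct (Rlt_le_dec p0 (g t)) as [h|[h|h]]; auto.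
    - assert (f (g t) < f p0) by (apply f_incr; lra). lra.
    - rewrite h in e. lra. }
  apply HP. change (Rabs (g t - b) < eps). rewrite Rabs_left1 by lra.
  destruct eps; simpl in *; lra.
Qed.

End IncreasingInverse.

Lemma increasing_inverse_on (f df : R -> R) (a b : R) :
  a <= b -> (forall s, is_derive f s (df s)) -> (forall s, a < s < b -> 0 < df s) ->
  exists g : R -> R, forall s, f a <= s <= f b -> a <= g s <= b /\ f (g s) = s.
Proof.
  intros hab Hf Hdf.
  exists (fun s => epsilon (inhabits 0) (fun x => a <= x <= b /\ f x = s)).
  intros s hs. apply epsilon_spec.
  destruct (IVT_gen f a b s (continuity_of_derive f df Hf)) as [x [hx e]].
  - rewrite Rmin_left, Rmax_right; lra.
  - rewrite Rmin_left, Rmax_right in hx by lra. now exists x.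
Qed.

Lemma increasing_inverse (f df : R -> R) :
  (forall s, is_derive f s (df s)) -> (forall s, 0 < df s) -> (forall t, exists s, f s = t) ->
  exists g : R -> R, (forall t, f (g t) = t) /\ (forall s, g (f s) = s) /\
    forall t, is_derive g t (/ df (g t)).
Proof.
  intros Hf Hdf Hsurj.
  set (g := fun t => epsilon (inhabits 0) (fun s => f s = t)).
  assert (Hfg : forall t, f (g t) = t) by (intro t; apply epsilon_spec, Hsurj).
  assert (f_incr : forall x y, x < y -> f x < f y).
  { intros x y h. apply (strictly_increasing_on f df x y); auto; lra. }
  assert (Hgf : forall s, g (f s) = s).
  { intro s. destruct (Rtotal_order (g (f s)) s) as [h|[h|h]]; auto;
      apply f_incr in h; rewrite Hfg in h; lra. }
  exists g. split; [exact Hfg | split; [exact Hgf|]].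
  intro t. set (a := g t - 1). set (b := g t + 1).
  assert (hfa : f a < t) by (rewrite <- (Hfg t); apply f_incr; unfold a; lra).
  assert (hfb : t < f b) by (rewrite <- (Hfg t); apply f_incr; unfold b; lra).
  apply (is_derive_inverse f df g a b); auto.
  intros s hs. split; [|apply Hfg].
  split; [destruct (Rle_lt_dec a (g s)) as [h|h] | destruct (Rle_lt_dec (g s) b) as [h|h]];
    auto; apply f_incr in h; rewrite Hfg in h; lra.
Qed.

Definition clock (k : R -> R) (th : R) : R := RInt k 0 th.

Section Clock.
Variable k : R -> R.
Hypothesis k_cont : forall th, continuous k th.

Let k_int a b : ex_RInt k a b := ex_RInt_continuous k a b (fun z _ => k_cont z).

Lemma clock_0 : clock k 0 = 0.
Proof. exact (RInt_point 0 k). Qed.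

Lemma is_derive_clock th : is_derive (clock k) th (k th).
Proof.
  apply (is_derive_RInt k (clock k) 0); [|apply k_cont].
  apply filter_forall. intro u. exact (RInt_correct k 0 u (k_int 0 u)).
Qed.

Lemma clock_add_period p th : (forall s, k (s + p) = k s) ->
  clock k (th + p) = clock k th + clock k p.
Proof.
  intro hp. unfold clock.
  rewrite <- (RInt_Chasles k 0 p (th + p)) by apply k_int.
  assert (H := RInt_comp_lin k 1 p 0 th (k_int _ _)).
  replace (1 * 0 + p) with p in H by ring. replace (1 * th + p) with (th + p) in H by ring.
  rewrite <- H. unfold plus; simpl. rewrite Rplus_comm. f_equal.
  apply RInt_ext. intros x _. unfold scal; simpl; unfold mult; simpl.
  rewrite !Rmult_1_l. apply hp.
Qed.

Lemma clock_surjective c : 0 < c -> (forall th, c <= k th) -> forall t, exists th, clock k th = t.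
Proof.
  intros hc Hkc t.
  assert (Hlin : forall a b, a <= b -> c * (b - a) <= RInt k a b).
  { intros a b hab.
    replace (c * (b - a)) with (RInt (fun _ => c) a b)
      by (rewrite RInt_const; unfold scal; simpl; unfold mult; simpl; ring).
    apply RInt_le; auto. apply ex_RInt_const. }
  assert (Hb : Rmin (clock k 0) (clock k (t / c)) <= t <= Rmax (clock k 0) (clock k (t / c))).
  { rewrite clock_0. unfold clock. destruct (Rle_dec 0 t) as [h|h].
    - assert (t <= RInt k 0 (t / c)).
      { replace t with (c * (t / c - 0)) at 1 by (field; lra). apply Hlin.
        apply Rdiv_le_0_compat; lra. }
      rewrite Rmin_left, Rmax_right; lra.
    - assert (RInt k 0 (t / c) <= t).
      { rewrite <- opp_RInt_swap by apply k_int.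
        assert (c * (0 - t / c) <= RInt k (t / c) 0).
        { apply Hlin. apply Rmult_le_reg_r with c; [lra|]. field_simplify; lra. }
        replace (c * (0 - t / c)) with (- t) in H by (field; lra).
        unfold opp; simpl. lra. }
      rewrite Rmin_right, Rmax_left; lra. }
  destruct (IVT_gen (clock k) 0 (t / c) t (continuity_of_derive _ _ is_derive_clock) Hb)
    as [th [_ e]].
  now exists th.
Qed.

Lemma clock_pos p : 0 < p -> (forall th, 0 < th < p -> 0 < k th) -> 0 < clock k p.
Proof.
  intros hp Hk. rewrite <- clock_0.
  apply (strictly_increasing_on (clock k) k 0 p is_derive_clock Hk); lra.
Qed.

Lemma clock_inverse_shift (psi : R -> R) p :
  (forall s, k (s + p) = k s) ->
  (forall t, clock k (psi t) = t) -> (forall th, psi (clock k th) = th) ->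
  forall t, psi (t + clock k p) = psi t + p.
Proof.
  intros hp H1 H2 t. rewrite <- (H1 t) at 1. now rewrite <- clock_add_period, H2.
Qed.

End Clock.

Lemma clock_inverse (k : R -> R) (c : R) :
  0 < c -> (forall th, continuous k th) -> (forall th, c <= k th) ->
  exists psi : R -> R, psi 0 = 0 /\ (forall t, clock k (psi t) = t) /\
    (forall th, psi (clock k th) = th) /\ forall t, is_derive psi t (/ k (psi t)).
Proof.
  intros hc Hk Hkc.
  destruct (increasing_inverse (clock k) k (is_derive_clock k Hk)
              (fun th => Rlt_le_trans _ _ _ hc (Hkc th)) (clock_surjective k Hk c hc Hkc))
    as [psi [H1 [H2 H3]]].
  exists psi. refine (conj _ (conj H1 (conj H2 H3))).
  rewrite <- (clock_0 k) at 1. apply H2.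
Qed.

Lemma clock_inverse_on (k : R -> R) (a b : R) :
  a < 0 < b -> (forall th, continuous k th) -> (forall th, a < th < b -> 0 < k th) ->
  exists psi : R -> R, clock k a < 0 < clock k b /\ psi 0 = 0 /\
    (forall t, clock k a < t < clock k b -> a < psi t < b /\ is_derive psi t (/ k (psi t))) /\
    filterlim psi (at_left (clock k b)) (locally b).
Proof.
  intros hab Hk Hkp. assert (Hd := is_derive_clock k Hk).
  assert (Hincr := strictly_increasing_on (clock k) k a b Hd Hkp).
  assert (hcb : clock k a < 0 < clock k b).
  { rewrite <- (clock_0 k). split; apply Hincr; lra. }
  destruct (increasing_inverse_on (clock k) k a b ltac:(lra) Hd Hkp) as [psi Hpsi].
  exists psi. split; [exact hcb | split; [|split]].
  - destruct (Hpsi 0 ltac:(lra)) as [h e]. assert (h0 := clock_0 k).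
    destruct (Rtotal_order (psi 0) 0) as [h'|[h'|h']]; auto.
    + assert (clock k (psi 0) < clock k 0) by (apply Hincr; lra). lra.
    + assert (clock k 0 < clock k (psi 0)) by (apply Hincr; lra). lra.
  - intros t ht. split.
    + now apply (inverse_interior (clock k) k psi a b Hd Hkp Hpsi).
    + now apply (is_derive_inverse (clock k) k psi a b Hd Hkp Hpsi).
  - apply (inverse_at_left (clock k) k psi a b Hd Hkp Hpsi). lra.
Qed.

(** * The barrier *)

Definition barrier (al y : R) : R := (1 - y) * (y - 2 * al * y ^ 2 / 3).
Definition dbarrier (al y : R) : R := 2 * al * y ^ 2 - (2 + 4 * al / 3) * y + 1.

Lemma is_derive_barrier al y : is_derive (barrier al) y (dbarrier al y).
Proof. unfold barrier, dbarrier. auto_derive; [easy | field]. Qed.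

Lemma cubic_double_root_factor a b c s t y :
  b = a * (2 * s + t) -> c = a * (s ^ 2 + 2 * s * t) ->
  (a * s ^ 3 - b * s ^ 2 + c * s) - (a * y ^ 3 - b * y ^ 2 + c * y)
    = a * (s - y) ^ 2 * (t - y) /\
  3 * a * y ^ 2 - 2 * b * y + c = a * (s - y) * (s + 2 * t - 3 * y).
Proof. intros -> ->. split; ring. Qed.

Definition sqrt_disc (al : R) : R := sqrt (4 * al ^ 2 - 6 * al + 9).
Definition y_crit (al : R) : R := (2 * al + 3 - sqrt_disc al) / (6 * al).
Definition y_far (al : R) : R := (3 + 2 * al + 2 * sqrt_disc al) / (6 * al).

Section Barrier.
Variable al : R.
Hypothesis al_pos : 0 < al.

Lemma sqrt_disc_sq : sqrt_disc al ^ 2 = 4 * al ^ 2 - 6 * al + 9.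
Proof. unfold sqrt_disc. rewrite pow2_sqrt; [ring | nra]. Qed.

Lemma sqrt_disc_pos : 0 < sqrt_disc al.
Proof. apply sqrt_lt_R0. nra. Qed.

Lemma barrier_factor y :
  barrier al (y_crit al) - barrier al y
    = 2 * al / 3 * (y_crit al - y) ^ 2 * (y_far al - y) /\
  dbarrier al y = 2 * al / 3 * (y_crit al - y) * (y_crit al + 2 * y_far al - 3 * y).
Proof.
  assert (H : forall z, barrier al z = 2 * al / 3 * z ^ 3 - (1 + 2 * al / 3) * z ^ 2 + 1 * z)
    by (intro z; unfold barrier; field).
  assert (Hd : dbarrier al y = 3 * (2 * al / 3) * y ^ 2 - 2 * (1 + 2 * al / 3) * y + 1)
    by (unfold dbarrier; field).
  rewrite !H, Hd. apply cubic_double_root_factor; unfold y_crit, y_far.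
  - field. lra.
  - transitivity (((2 * al + 3) ^ 2 - sqrt_disc al ^ 2) / (18 * al)).
    + rewrite sqrt_disc_sq. field. lra.
    + field. lra.
Qed.

Lemma y_crit_bounds : 0 < y_crit al < 1.
Proof.
  assert (h := sqrt_disc_sq). assert (h' := sqrt_disc_pos). unfold y_crit.
  split; [apply Rdiv_lt_0_compat | apply Rlt_div_l]; nra.
Qed.

Lemma y_far_gt1 : 1 < y_far al.
Proof.
  assert (h := sqrt_disc_sq). assert (h' := sqrt_disc_pos). unfold y_far.
  apply Rlt_div_r; nra.
Qed.

Lemma barrier_le_crit y : y <= y_far al -> barrier al y <= barrier al (y_crit al).
Proof.
  intro hy. destruct (barrier_factor y) as [H _].
  assert (0 <= 2 * al / 3 * (y_crit al - y) ^ 2 * (y_far al - y)).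
  { apply Rmult_le_pos; [apply Rmult_le_pos; [lra | apply pow2_ge_0] | lra]. }
  lra.
Qed.

Lemma barrier_crit_pos : 0 < barrier al (y_crit al).
Proof.
  destruct (barrier_factor 0) as [H _]. assert (h := y_crit_bounds). assert (h' := y_far_gt1).
  replace (barrier al 0) with 0 in H by (unfold barrier; field).
  assert (0 < 2 * al / 3 * (y_crit al - 0) ^ 2 * (y_far al - 0)).
  { apply Rmult_lt_0_compat; [apply Rmult_lt_0_compat; [lra | apply pow_lt] | ]; lra. }
  lra.
Qed.

Lemma dbarrier_pos y : y < y_crit al -> 0 < dbarrier al y.
Proof.
  intro hy. destruct (barrier_factor y) as [_ ->]. assert (h := y_far_gt1).
  assert (h' := y_crit_bounds).
  apply Rmult_lt_0_compat; [apply Rmult_lt_0_compat|]; lra.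
Qed.

Lemma kappa_barrier : kappa al = barrier al (y_crit al) / 2.
Proof.
  assert (h := sqrt_disc_sq). unfold kappa. fold (sqrt_disc al).
  set (mu := sqrt_disc al) in *.
  assert (key : (1 - y_crit al) * (1 - 2 * al * y_crit al / 3)
     = (- 4 * al ^ 2 + 24 * al - 9 + 2 * al * mu + 3 * mu) / (54 * al)).
  { transitivity ((4 * al - 3 + mu) * (6 - 2 * al + mu) / (54 * al)).
    - unfold y_crit. fold mu. field. lra.
    - replace ((4 * al - 3 + mu) * (6 - 2 * al + mu)) with
        (- 8 * al ^ 2 + 30 * al - 18 + 2 * al * mu + 3 * mu + mu ^ 2) by ring.
      rewrite h. f_equal. ring. }
  replace (barrier al (y_crit al))
    with (y_crit al * ((1 - y_crit al) * (1 - 2 * al * y_crit al / 3)))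
    by (unfold barrier; field).
  rewrite key. unfold y_crit. fold mu. field. lra.
Qed.

End Barrier.

(** * The dimensionless equation *)

Definition accel (al be y : R) : R := - y + al * y ^ 2 + be / (2 * (1 - y) ^ 2).

Lemma accel_barrier al be y : y <> 1 ->
  accel al be y = (be - barrier al y - y * (1 - y) * dbarrier al y) / (2 * (1 - y) ^ 2).
Proof. intro h. unfold accel, barrier, dbarrier. field. contradict h. lra. Qed.

Definition beta_par (E Ac A L d eps0 V : R) : R := eps0 * A * V ^ 2 * L / (E * Ac * d ^ 3).
Definition omega_par (m E Ac L : R) : R := sqrt (E * Ac / (m * L)).

Definition scaled_motion_at (al be w : R) (y v : R -> R) (t : R) : Prop :=
  0 <= y t < 1 /\ is_derive y t (v t) /\ is_derive v t (w ^ 2 * accel al be (y t)).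

Definition scaled_solution_on (al be w : R) (lo hi : Rbar) (y : R -> R) : Prop :=
  y 0 = 0 /\ exists v : R -> R, v 0 = 0 /\
    forall t : R, Rbar_lt lo t -> Rbar_lt t hi -> scaled_motion_at al be w y v t.

Section Scaling.
Variables m E D Ac A L d eps0 V : R.
Hypotheses (m_pos : 0 < m) (E_pos : 0 < E) (Ac_pos : 0 < Ac) (L_pos : 0 < L) (d_pos : 0 < d).

Let al := alpha_par E D L d.
Let be := beta_par E Ac A L d eps0 V.
Let w := omega_par m E Ac L.

Lemma ode_at_scaled (y v : R -> R) (t : R) :
  scaled_motion_at al be w y v t ->
  ode_at m E D Ac A L d eps0 V (fun t => d * y t) (fun t => d * v t)
    (fun t => d * (w ^ 2 * accel al be (y t))) t.
Proof.
  intros [hy [Hy Hv]]. split; [|split; [|split]].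
  - nra.
  - now apply (is_derive_scal (fun t => y t)).
  - now apply (is_derive_scal (fun t => v t)).
  - assert (hw : w ^ 2 = E * Ac / (m * L)).
    { unfold w, omega_par. rewrite pow2_sqrt; [reflexivity|].
      apply Rlt_le, Rdiv_lt_0_compat; nra. }
    rewrite Rabs_pos_eq by (apply Rdiv_le_0_compat; nra).
    assert (d - d * y t <> 0) by nra.
    rewrite hw. unfold accel, al, be, alpha_par, beta_par.
    field. repeat split; lra.
Qed.

Lemma ivp_solution_on_scaled (lo hi : Rbar) (y : R -> R) :
  scaled_solution_on al be w lo hi y ->
  ivp_solution_on m E D Ac A L d eps0 V lo hi (fun t => d * y t).
Proof.
  intros [y0 [v [v0 Hv]]]. split; [rewrite y0; ring|].
  exists (fun t => d * v t), (fun t => d * (w ^ 2 * accel al be (y t))).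
  split; [rewrite v0; ring|].
  intros t h1 h2. apply ode_at_scaled, Hv; assumption.
Qed.

End Scaling.

(* The motion in a phase variable [th], where [dt/dth = k th]: [Y] is the position and [G] the velocity. *)
Definition orbit_at (al be w : R) (Y G k : R -> R) (th : R) : Prop :=
  0 <= Y th < 1 /\ is_derive Y th (k th * G th) /\
  is_derive G th (k th * (w ^ 2 * accel al be (Y th))).

(* If [dY/dth = c u] and the energy integral reads [(dY/dt)^2 = w^2 u^2 q], then
   [dt/dth = c / (w sqrt q)] and the velocity is [w u sqrt q]. *)
Definition orbit_dt (w : R) (c q : R -> R) (th : R) : R := c th / (w * sqrt (q th)).
Definition orbit_vel (w : R) (u q : R -> R) (th : R) : R := w * u th * sqrt (q th).

Lemma orbit_at_intro (al be w : R) (Y c u q : R -> R) (th u1 q1 : R) :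
  0 < w -> 0 < q th -> 0 <= Y th < 1 ->
  is_derive Y th (c th * u th) -> is_derive u th u1 -> is_derive q th q1 ->
  u1 * q th + u th * q1 / 2 = c th * accel al be (Y th) ->
  orbit_at al be w Y (orbit_vel w u q) (orbit_dt w c q) th.
Proof.
  intros hw hq hY HY Hu Hq Heq.
  assert (hs : 0 < sqrt (q th)) by now apply sqrt_lt_R0.
  assert (hss := sqrt_sqrt (q th) (Rlt_le _ _ hq)).
  split; [exact hY | split].
  - unfold orbit_dt, orbit_vel. replace (c th / (w * sqrt (q th)) * (w * u th * sqrt (q th)))
      with (c th * u th) by (field; split; lra). exact HY.
  - unfold orbit_vel. auto_derive.
    + repeat split; try (eexists; eassumption); lra.
    + replace (Derive (fun x => u x) th) with u1 by (symmetry; now apply is_derive_unique).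
      replace (Derive (fun x => q x) th) with q1 by (symmetry; now apply is_derive_unique).
      unfold orbit_dt.
      replace (c th / (w * sqrt (q th)) * (w ^ 2 * accel al be (Y th)))
        with (w / sqrt (q th) * (c th * accel al be (Y th))) by (field; split; lra).
      rewrite <- Heq. set (s := sqrt (q th)) in *. rewrite <- hss. field. lra.
Qed.

Lemma continuous_orbit_dt (w : R) (c q : R -> R) (th c1 q1 : R) :
  0 < w -> 0 < q th -> is_derive c th c1 -> is_derive q th q1 ->
  continuous (orbit_dt w c q) th.
Proof.
  intros hw hq Hc Hq. apply (@ex_derive_continuous R_AbsRing R_NormedModule).
  unfold orbit_dt. auto_derive.
  repeat split; try (eexists; eassumption); try lra.
  apply Rgt_not_eq, Rmult_lt_0_compat; [exact hw | now apply sqrt_lt_R0].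
Qed.

Lemma orbit_dt_ge (w c0 Q : R) (c q : R -> R) (th : R) :
  0 < w -> 0 <= c0 <= c th -> 0 < q th <= Q ->
  c0 / (w * sqrt Q) <= orbit_dt w c q th.
Proof.
  intros hw hc hq. unfold orbit_dt.
  assert (0 < sqrt (q th)) by (apply sqrt_lt_R0; lra).
  assert (sqrt (q th) <= sqrt Q) by (apply sqrt_le_1_alt; lra).
  unfold Rdiv. apply Rmult_le_compat; try lra.
  - apply Rlt_le, Rinv_0_lt_compat. nra.
  - apply Rinv_le_contravar; nra.
Qed.

Lemma scaled_motion_at_reparam (al be w : R) (Y G k psi : R -> R) (t : R) :
  is_derive psi t (/ k (psi t)) -> k (psi t) <> 0 -> orbit_at al be w Y G k (psi t) ->
  scaled_motion_at al be w (fun t => Y (psi t)) (fun t => G (psi t)) t.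
Proof.
  intros Hpsi hk [hY [HY HG]]. split; [exact hY | split].
  - replace (G (psi t)) with (scal (/ k (psi t)) (k (psi t) * G (psi t)))
      by (unfold scal; simpl; unfold mult; simpl; field; exact hk).
    now apply (is_derive_comp Y psi).
  - replace (w ^ 2 * accel al be (Y (psi t)))
      with (scal (/ k (psi t)) (k (psi t) * (w ^ 2 * accel al be (Y (psi t)))))
      by (unfold scal; simpl; unfold mult; simpl; field; exact hk).
    now apply (is_derive_comp G psi).
Qed.

Lemma scaled_solution_on_reparam (al be w : R) (lo hi : Rbar) (Y G k psi : R -> R) :
  psi 0 = 0 -> Y 0 = 0 -> G 0 = 0 ->
  (forall t : R, Rbar_lt lo t -> Rbar_lt t hi ->
     is_derive psi t (/ k (psi t)) /\ k (psi t) <> 0 /\ orbit_at al be w Y G k (psi t)) ->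
  scaled_solution_on al be w lo hi (fun t => Y (psi t)).
Proof.
  intros h0 hY hG H. split; [now rewrite h0|].
  exists (fun t => G (psi t)). split; [now rewrite h0|].
  intros t h1 h2. destruct (H t h1 h2) as [Hpsi [hk Horb]].
  now apply (scaled_motion_at_reparam al be w Y G k psi).
Qed.

(** * Periodic motion *)

Section PeriodicOrbit.
Variables al w y1 : R.
Hypotheses (al_pos : 0 < al) (w_pos : 0 < w) (y1_ge0 : 0 <= y1) (y1_lt : y1 < y_crit al).

(* [(barrier al y1 - barrier al y) / (y1 - y)]. *)
Definition chord_slope (y : R) : R :=
  2 * al / 3 * (y ^ 2 + y * y1 + y1 ^ 2) - (1 + 2 * al / 3) * (y + y1) + 1.
Definition dchord_quot (y : R) : R :=
  ((2 * al / 3 * (2 * y + y1) - (1 + 2 * al / 3)) * (1 - y) + chord_slope y) / (1 - y) ^ 2.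

Definition per_Y (th : R) : R := y1 * (1 - cos th) / 2.
Definition per_u (th : R) : R := y1 * sin th / 2.
Definition per_q (th : R) : R := chord_slope (per_Y th) / (1 - per_Y th).

Let y1_lt1 : y1 < 1 := Rlt_trans _ _ _ y1_lt (proj2 (y_crit_bounds al al_pos)).

Lemma per_Y_bounds th : 0 <= per_Y th <= y1.
Proof. unfold per_Y. assert (h := COS_bound th). split; nra. Qed.

(* [chord_slope y] is the mean of [dbarrier] over [[y, y1]], which Simpson's rule computes exactly. *)
Lemma chord_slope_simpson y :
  chord_slope y = (dbarrier al y + 4 * dbarrier al ((y + y1) / 2) + dbarrier al y1) / 6.
Proof. unfold chord_slope, dbarrier. field. Qed.

Lemma chord_slope_bounds y : 0 <= y <= y1 -> 0 < chord_slope y <= 2 * al + 1.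
Proof.
  intro hy. split.
  - rewrite chord_slope_simpson.
    assert (0 < dbarrier al y) by (apply dbarrier_pos; lra).
    assert (0 < dbarrier al ((y + y1) / 2)) by (apply dbarrier_pos; lra).
    assert (0 < dbarrier al y1) by (apply dbarrier_pos; lra).
    lra.
  - unfold chord_slope.
    assert (2 * al / 3 * (y ^ 2 + y * y1 + y1 ^ 2) <= 2 * al / 3 * 3)
      by (apply Rmult_le_compat_l; nra).
    assert (0 <= (1 + 2 * al / 3) * (y + y1)) by (apply Rmult_le_pos; lra).
    lra.
Qed.

Lemma per_q_bounds th : 0 < per_q th <= (2 * al + 1) / (1 - y1).
Proof.
  assert (hY := per_Y_bounds th). destruct (chord_slope_bounds (per_Y th) hY) as [h1 h2].
  unfold per_q. split; [apply Rdiv_lt_0_compat; lra|].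
  unfold Rdiv. apply Rmult_le_compat; try lra.
  - apply Rlt_le, Rinv_0_lt_compat. lra.
  - apply Rinv_le_contravar; lra.
Qed.

Lemma is_derive_per_q th : is_derive per_q th (dchord_quot (per_Y th) * per_u th).
Proof.
  assert (hY := per_Y_bounds th).
  unfold per_q, chord_slope, per_Y. auto_derive.
  - unfold per_Y in hY. lra.
  - unfold dchord_quot, chord_slope, per_u. field. unfold per_Y in hY. lra.
Qed.

Lemma per_energy th :
  y1 * cos th / 2 * per_q th + per_u th * (dchord_quot (per_Y th) * per_u th) / 2
    = 1 * accel al (barrier al y1) (per_Y th).
Proof.
  assert (hY := per_Y_bounds th).
  assert (hs : sin th ^ 2 = 1 - cos th ^ 2)
    by (rewrite <- (sin2_cos2 th); unfold Rsqr; ring).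
  replace (per_u th * (dchord_quot (per_Y th) * per_u th) / 2)
    with (y1 ^ 2 * (1 - cos th ^ 2) * dchord_quot (per_Y th) / 8)
    by (unfold per_u; rewrite <- hs; field).
  unfold per_q, dchord_quot, chord_slope, accel, barrier. unfold per_Y in *.
  field. lra.
Qed.

Lemma orbit_at_per th :
  orbit_at al (barrier al y1) w per_Y (orbit_vel w per_u per_q)
    (orbit_dt w (fun _ => 1) per_q) th.
Proof.
  assert (hY := per_Y_bounds th).
  apply (orbit_at_intro _ _ _ _ _ _ _ _ (y1 * cos th / 2) (dchord_quot (per_Y th) * per_u th)).
  - exact w_pos.
  - apply per_q_bounds.
  - lra.
  - unfold per_Y, per_u. auto_derive; [easy | field].
  - unfold per_u. auto_derive; [easy | field].
  - apply is_derive_per_q.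
  - apply per_energy.
Qed.

Lemma per_Y_periodic th : per_Y (th + 2 * PI) = per_Y th.
Proof. unfold per_Y. now rewrite cos_plus, cos_2PI, sin_2PI, Rmult_0_r, Rminus_0_r, Rmult_1_r. Qed.

Lemma per_dt_periodic th :
  orbit_dt w (fun _ => 1) per_q (th + 2 * PI) = orbit_dt w (fun _ => 1) per_q th.
Proof. unfold orbit_dt, per_q. now rewrite per_Y_periodic. Qed.

Lemma per_dt_bounds th :
  continuous (orbit_dt w (fun _ => 1) per_q) th /\
  1 / (w * sqrt ((2 * al + 1) / (1 - y1))) <= orbit_dt w (fun _ => 1) per_q th.
Proof.
  split.
  - apply (continuous_orbit_dt w _ _ th 0 (dchord_quot (per_Y th) * per_u th) w_pos).
    + apply per_q_bounds.
    + auto_derive; auto.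
    + apply is_derive_per_q.
  - apply orbit_dt_ge; [exact w_pos | lra | apply per_q_bounds].
Qed.

End PeriodicOrbit.

Lemma barrier_turning_point (al be : R) :
  0 < al -> 0 <= be < barrier al (y_crit al) ->
  exists y1 : R, 0 <= y1 < y_crit al /\ barrier al y1 = be.
Proof.
  intros hal hbe. assert (hcrit := y_crit_bounds al hal).
  destruct (IVT_gen (barrier al) 0 (y_crit al) be
              (continuity_of_derive _ _ (is_derive_barrier al))) as [y1 [hy1 e]].
  { replace (barrier al 0) with 0 by (unfold barrier; field).
    rewrite Rmin_left, Rmax_right; lra. }
  rewrite Rmin_left, Rmax_right in hy1 by lra.
  exists y1. split; [|exact e].
  destruct hy1 as [h [h'|h']]; [lra | subst; lra].
Qed.

Lemma scaled_periodic_solution (al be w : R) :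
  0 < al -> 0 < w -> 0 <= be < barrier al (y_crit al) ->
  exists y : R -> R, scaled_solution_on al be w m_infty p_infty y /\
    exists p : R, 0 < p /\ forall t, y (t + p) = y t.
Proof.
  intros hal hw hbe. destruct (barrier_turning_point al be hal hbe) as [y1 [hy1 <-]].
  set (k := orbit_dt w (fun _ => 1) (per_q al y1)).
  assert (Hk := per_dt_bounds al w y1 hal hw (proj1 hy1) (proj2 hy1)).
  assert (hc : 0 < 1 / (w * sqrt ((2 * al + 1) / (1 - y1)))).
  { assert (h := per_q_bounds al y1 hal (proj1 hy1) (proj2 hy1) 0).
    apply Rdiv_lt_0_compat; [lra|]. apply Rmult_lt_0_compat; [lra|].
    apply sqrt_lt_R0; lra. }
  assert (hk : forall th, 0 < k th) by (intro th; apply (Rlt_le_trans _ _ _ hc), Hk).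
  destruct (clock_inverse k _ hc (fun th => proj1 (Hk th)) (fun th => proj2 (Hk th)))
    as [psi [h0 [H1 [H2 Hd]]]].
  exists (fun t => per_Y y1 (psi t)). split.
  - apply (scaled_solution_on_reparam _ _ _ _ _ _ (orbit_vel w (per_u y1) (per_q al y1)) k); auto.
    + unfold per_Y. rewrite cos_0. field.
    + unfold orbit_vel, per_u. rewrite sin_0. field.
    + intros t _ _. split; [apply Hd | split; [apply Rgt_not_eq, hk|]].
      apply orbit_at_per; tauto.
  - exists (clock k (2 * PI)). split.
    + apply clock_pos; auto; [apply Hk | assert (h := PI_RGT_0); lra].
    + intro t. rewrite (clock_inverse_shift k (fun th => proj1 (Hk th)) psi); auto.
      * apply per_Y_periodic.
      * apply per_dt_periodic.
Qed.

(** * Critical motion *)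

Lemma is_derive_tanh u : is_derive tanh u (1 - tanh u ^ 2).
Proof.
  assert (h1 := exp_pos u). assert (h2 := exp_pos (- u)).
  unfold tanh, sinh, cosh. auto_derive; [lra | field; lra].
Qed.

Lemma tanh_sq_lt1 u : 0 < 1 - tanh u ^ 2.
Proof.
  assert (h1 := exp_pos u). assert (h2 := exp_pos (- u)).
  replace (1 - tanh u ^ 2) with (4 * exp u * exp (- u) / (exp u + exp (- u)) ^ 2)
    by (unfold tanh, sinh, cosh; field; lra).
  apply Rdiv_lt_0_compat; [nra | apply pow_lt; lra].
Qed.

Lemma tanh_0 : tanh 0 = 0.
Proof. unfold tanh, sinh. rewrite Ropp_0, Rminus_diag, Rdiv_0_l. apply Rdiv_0_l. Qed.

Section CriticalOrbit.
Variables al w : R.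
Hypotheses (al_pos : 0 < al) (w_pos : 0 < w).

Definition crit_Y (u : R) : R := y_crit al * tanh u ^ 2.
Definition crit_u (u : R) : R := y_crit al * tanh u * (1 - tanh u ^ 2).
Definition crit_q (u : R) : R :=
  2 * al / 3 * y_crit al * (y_far al - crit_Y u) / (1 - crit_Y u).
Definition crit_qmax : R := 2 * al / 3 * y_crit al * y_far al / (1 - y_crit al).

Let crit_facts : 0 < y_crit al < 1 /\ 1 < y_far al :=
  conj (y_crit_bounds al al_pos) (y_far_gt1 al al_pos).

Lemma crit_Y_bounds u : 0 <= crit_Y u < y_crit al.
Proof.
  unfold crit_Y. assert (h := tanh_sq_lt1 u). assert (0 <= tanh u ^ 2) by apply pow2_ge_0.
  destruct crit_facts. split; nra.
Qed.

Lemma crit_q_bounds u : 0 < crit_q u <= crit_qmax.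
Proof.
  assert (h := crit_Y_bounds u). destruct crit_facts as [[h1 h2] h3].
  assert (0 < 2 * al / 3 * y_crit al) by (apply Rmult_lt_0_compat; lra).
  unfold crit_q, crit_qmax. split.
  - apply Rdiv_lt_0_compat; [apply Rmult_lt_0_compat|]; lra.
  - unfold Rdiv. rewrite !(Rmult_assoc (2 * al / 3 * y_crit al)).
    apply Rmult_le_compat_l; [lra|].
    apply Rmult_le_compat; try lra.
    + apply Rlt_le, Rinv_0_lt_compat. lra.
    + apply Rinv_le_contravar; lra.
Qed.

Lemma is_derive_crit_Y u : is_derive crit_Y u (2 * crit_u u).
Proof.
  assert (H := is_derive_tanh u). unfold crit_Y, crit_u. auto_derive.
  - eexists; eassumption.
  - replace (Derive (fun x => tanh x) u) with (1 - tanh u ^ 2)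
      by (symmetry; now apply is_derive_unique).
    ring.
Qed.

Lemma is_derive_crit_u u :
  is_derive crit_u u (y_crit al * (1 - tanh u ^ 2) * (1 - 3 * tanh u ^ 2)).
Proof.
  assert (H := is_derive_tanh u). unfold crit_u. auto_derive.
  - split; [|split]; [eexists; eassumption.. | easy].
  - replace (Derive (fun x => tanh x) u) with (1 - tanh u ^ 2)
      by (symmetry; now apply is_derive_unique).
    ring.
Qed.

Lemma is_derive_crit_q u :
  is_derive crit_q u
    (2 * al / 3 * y_crit al * (y_far al - 1) / (1 - crit_Y u) ^ 2 * (2 * crit_u u)).
Proof.
  assert (H := is_derive_crit_Y u). assert (h := crit_Y_bounds u). destruct crit_facts.
  unfold crit_q. auto_derive.
  - split; [|split; [|split]]; [eexists; eassumption.. | lra | easy].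
  - replace (Derive (fun x => crit_Y x) u) with (2 * crit_u u)
      by (symmetry; now apply is_derive_unique).
    field. lra.
Qed.

Lemma crit_energy u :
  y_crit al * (1 - tanh u ^ 2) * (1 - 3 * tanh u ^ 2) * crit_q u
    + crit_u u * (2 * al / 3 * y_crit al * (y_far al - 1) / (1 - crit_Y u) ^ 2 * (2 * crit_u u)) / 2
    = 2 * accel al (barrier al (y_crit al)) (crit_Y u).
Proof.
  assert (h := crit_Y_bounds u). destruct crit_facts.
  rewrite accel_barrier by lra.
  destruct (barrier_factor al al_pos (crit_Y u)) as [-> ->].
  unfold crit_q, crit_u. unfold crit_Y in *.
  set (T := tanh u) in *. set (s := y_crit al) in *. set (t3 := y_far al).
  field. lra.
Qed.

Lemma orbit_at_crit u :
  orbit_at al (barrier al (y_crit al)) w crit_Y (orbit_vel w crit_u crit_q)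
    (orbit_dt w (fun _ => 2) crit_q) u.
Proof.
  assert (h := crit_Y_bounds u). destruct crit_facts.
  eapply (orbit_at_intro _ _ _ _ _ _ _ _ _ _ w_pos (proj1 (crit_q_bounds u))).
  - lra.
  - apply is_derive_crit_Y.
  - apply is_derive_crit_u.
  - apply is_derive_crit_q.
  - apply crit_energy.
Qed.

Lemma crit_dt_bounds u :
  continuous (orbit_dt w (fun _ => 2) crit_q) u /\
  2 / (w * sqrt crit_qmax) <= orbit_dt w (fun _ => 2) crit_q u.
Proof.
  split.
  - eapply (continuous_orbit_dt w _ _ u 0 _ w_pos (proj1 (crit_q_bounds u))).
    + auto_derive; auto.
    + apply is_derive_crit_q.
  - apply orbit_dt_ge; [exact w_pos | lra | apply crit_q_bounds].
Qed.

End CriticalOrbit.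

Lemma scaled_critical_solution (al w : R) :
  0 < al -> 0 < w ->
  exists y : R -> R, scaled_solution_on al (barrier al (y_crit al)) w m_infty p_infty y.
Proof.
  intros hal hw.
  set (k := orbit_dt w (fun _ => 2) (crit_q al)).
  assert (hc : 0 < 2 / (w * sqrt (crit_qmax al))).
  { assert (h := crit_q_bounds al hal 0).
    apply Rdiv_lt_0_compat; [lra|]. apply Rmult_lt_0_compat; [lra|]. apply sqrt_lt_R0; lra. }
  destruct (clock_inverse k _ hc (fun u => proj1 (crit_dt_bounds al w hal hw u))
              (fun u => proj2 (crit_dt_bounds al w hal hw u))) as [psi [h0 [_ [_ Hd]]]].
  exists (fun t => crit_Y al (psi t)).
  apply (scaled_solution_on_reparam _ _ _ _ _ _ (orbit_vel w (crit_u al) (crit_q al)) k); auto.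
  - unfold crit_Y. rewrite tanh_0. ring.
  - unfold orbit_vel, crit_u. rewrite tanh_0. ring.
  - intros t _ _. split; [apply Hd | split].
    + apply Rgt_not_eq, (Rlt_le_trans _ _ _ hc), crit_dt_bounds; auto.
    + apply orbit_at_crit; auto.
Qed.

(** * Pull-in *)

Section PullInOrbit.
Variables al be w : R.
Hypotheses (al_pos : 0 < al) (w_pos : 0 < w) (be_gt : barrier al (y_crit al) < be).

Definition pull_Y (p : R) : R := sin p ^ 2.
Definition pull_c (p : R) : R := 2 * cos p ^ 2.
Definition pull_u (p : R) : R := sin p / cos p.
Definition pull_q (p : R) : R := be - barrier al (pull_Y p).

Lemma cos_sq_pull_Y p : cos p ^ 2 = 1 - pull_Y p.
Proof. unfold pull_Y. rewrite <- (sin2_cos2 p). unfold Rsqr. ring. Qed.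

Lemma pull_q_pos p : 0 < pull_q p.
Proof.
  assert (h := y_far_gt1 al al_pos). assert (h' := cos_sq_pull_Y p).
  assert (0 <= cos p ^ 2) by apply pow2_ge_0.
  assert (barrier al (pull_Y p) <= barrier al (y_crit al))
    by (apply barrier_le_crit; [exact al_pos | lra]).
  unfold pull_q. lra.
Qed.

Lemma is_derive_pull_q p :
  is_derive pull_q p (- dbarrier al (pull_Y p) * (2 * sin p * cos p)).
Proof. unfold pull_q, pull_Y, barrier, dbarrier. auto_derive; [easy | field]. Qed.

Lemma pull_energy p : cos p <> 0 ->
  / cos p ^ 2 * pull_q p + pull_u p * (- dbarrier al (pull_Y p) * (2 * sin p * cos p)) / 2
    = pull_c p * accel al be (pull_Y p).
Proof.
  intro hc. assert (h := cos_sq_pull_Y p).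
  assert (0 < cos p ^ 2) by (apply pow2_gt_0; exact hc).
  rewrite accel_barrier by lra.
  unfold pull_c, pull_u, pull_q. rewrite h.
  replace (sin p / cos p * (- dbarrier al (pull_Y p) * (2 * sin p * cos p)) / 2)
    with (- pull_Y p * dbarrier al (pull_Y p)) by (unfold pull_Y; field; exact hc).
  field. lra.
Qed.

Lemma orbit_at_pull p : - PI / 2 < p < PI / 2 ->
  orbit_at al be w pull_Y (orbit_vel w pull_u pull_q) (orbit_dt w pull_c pull_q) p.
Proof.
  intro hp. assert (hc : 0 < cos p) by (apply cos_gt_0; lra).
  assert (h := cos_sq_pull_Y p). assert (0 < cos p ^ 2) by (apply pow_lt; lra).
  apply (orbit_at_intro _ _ _ _ _ _ _ _ (/ cos p ^ 2)
           (- dbarrier al (pull_Y p) * (2 * sin p * cos p)) w_pos (pull_q_pos p)).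
  - split; [apply pow2_ge_0 | lra].
  - unfold pull_Y, pull_c, pull_u. auto_derive; [easy | field; lra].
  - unfold pull_u. auto_derive; [lra|].
    replace (/ cos p ^ 2) with ((sin p ^ 2 + cos p ^ 2) / cos p ^ 2)
      by (unfold pull_Y in h; rewrite h; field; lra).
    field. lra.
  - apply is_derive_pull_q.
  - apply pull_energy. lra.
Qed.

Lemma pull_dt_continuous p : continuous (orbit_dt w pull_c pull_q) p.
Proof.
  eapply (continuous_orbit_dt w _ _ p _ _ w_pos (pull_q_pos p)).
  - unfold pull_c. auto_derive; easy.
  - apply is_derive_pull_q.
Qed.

Lemma pull_dt_pos p : - PI / 2 < p < PI / 2 -> 0 < orbit_dt w pull_c pull_q p.
Proof.
  intro hp. assert (hc : 0 < cos p) by (apply cos_gt_0; lra).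
  unfold orbit_dt, pull_c. apply Rdiv_lt_0_compat; [nra|].
  apply Rmult_lt_0_compat; [exact w_pos | apply sqrt_lt_R0, pull_q_pos].
Qed.

End PullInOrbit.

Lemma scaled_pull_in (al be w : R) :
  0 < al -> 0 < w -> barrier al (y_crit al) < be ->
  exists (lo T : R) (y : R -> R), lo < 0 < T /\ scaled_solution_on al be w lo T y /\
    filterlim y (at_left T) (locally 1).
Proof.
  intros hal hw hbe. assert (hPI := PI_RGT_0).
  set (k := orbit_dt w pull_c (pull_q al be)).
  destruct (clock_inverse_on k (- PI / 2) (PI / 2) ltac:(lra)
              (pull_dt_continuous al be w hal hw hbe) (pull_dt_pos al be w hal hw hbe))
    as [psi [hlim [h0 [Hpsi Hend]]]].
  exists (clock k (- PI / 2)), (clock k (PI / 2)), (fun t => pull_Y (psi t)).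
  split; [exact hlim | split].
  - apply (scaled_solution_on_reparam _ _ _ _ _ _ (orbit_vel w pull_u (pull_q al be)) k); auto.
    + unfold pull_Y. rewrite sin_0. ring.
    + unfold orbit_vel, pull_u. rewrite sin_0. unfold Rdiv. ring.
    + intros t h1 h2. simpl in h1, h2. destruct (Hpsi t (conj h1 h2)) as [hp Hd].
      split; [exact Hd | split].
      * apply Rgt_not_eq, pull_dt_pos; auto.
      * apply orbit_at_pull; auto.
  - apply (filterlim_comp _ _ _ psi pull_Y _ _ _ Hend).
    replace 1 with (pull_Y (PI / 2)) by (unfold pull_Y; rewrite sin_PI2; ring).
    apply (@ex_derive_continuous R_AbsRing R_NormedModule).
    unfold pull_Y. auto_derive. easy.
Qed.

Lemma beta_cmp_V_pull_in (m E D Ac A L d eps0 V : R) :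
  0 < E -> 0 < D -> 0 < Ac -> 0 < A -> 0 < L -> 0 < d -> 0 < eps0 -> 0 <= V ->
  let be := beta_par E Ac A L d eps0 V in
  let bs := barrier (alpha_par E D L d) (y_crit (alpha_par E D L d)) in
  let Vp := V_pull_in m E D Ac A L d eps0 in
  (V < Vp -> be < bs) /\ (V = Vp -> be = bs) /\ (Vp < V -> bs < be).
Proof.
  intros hE hD hAc hA hL hd heps hV be bs Vp.
  assert (hal : 0 < alpha_par E D L d) by (apply Rdiv_lt_0_compat; nra).
  assert (hbs : 0 < bs) by now apply barrier_crit_pos.
  assert (hK : 0 < E * Ac * d ^ 3 / (eps0 * A * L)).
  { assert (0 < d ^ 3) by (apply pow_lt; lra).
    apply Rdiv_lt_0_compat; repeat apply Rmult_lt_0_compat; lra. }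
  assert (HVp : Vp = sqrt (E * Ac * d ^ 3 / (eps0 * A * L) * bs)).
  { unfold Vp, V_pull_in. rewrite kappa_barrier by exact hal. f_equal.
    unfold bs. field. repeat split; lra. }
  assert (hVp : 0 < Vp) by (rewrite HVp; apply sqrt_lt_R0; nra).
  assert (Hbe : be * Vp ^ 2 = bs * V ^ 2).
  { rewrite HVp, pow2_sqrt by nra. unfold be, beta_par. field. repeat split; lra. }
  repeat split; intro h.
  - apply (Rmult_lt_reg_r (Vp ^ 2)); [nra|]. rewrite Hbe. apply Rmult_lt_compat_l; nra.
  - subst V. apply (Rmult_eq_reg_r (Vp ^ 2)); nra.
  - apply (Rmult_lt_reg_r (Vp ^ 2)); [nra|]. rewrite Hbe. apply Rmult_lt_compat_l; nra.
Qed.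

Lemma scaled_params_pos (m E D Ac A L d eps0 V : R) :
  0 < m -> 0 < E -> 0 < D -> 0 < Ac -> 0 < A -> 0 < L -> 0 < d -> 0 < eps0 ->
  0 < alpha_par E D L d /\ 0 < omega_par m E Ac L /\ 0 <= beta_par E Ac A L d eps0 V.
Proof.
  intros hm hE hD hAc hA hL hd heps. assert (0 < d ^ 3) by (apply pow_lt; lra).
  unfold alpha_par, omega_par, beta_par.
  split; [|split].
  - apply Rdiv_lt_0_compat; nra.
  - apply sqrt_lt_R0, Rdiv_lt_0_compat; nra.
  - apply Rdiv_le_0_compat; [|repeat apply Rmult_lt_0_compat; lra].
    apply Rmult_le_pos; [apply Rmult_le_pos; [nra | apply pow2_ge_0] | lra].
Qed.

Theorem mainTheorem2 (m E D Ac A L d eps0 V : R)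
  (hm : 0 < m) (hE : 0 < E) (hD : 0 < D) (hAc : 0 < Ac) (hA : 0 < A)
  (hL : 0 < L) (hd : 0 < d) (heps0 : 0 < eps0) (hV : 0 <= V) :
  (V < V_pull_in m E D Ac A L d eps0 ->
     exists x : R -> R, periodic_solution m E D Ac A L d eps0 V x) /\
  (V <= V_pull_in m E D Ac A L d eps0 ->
     exists x : R -> R, global_solution m E D Ac A L d eps0 V x) /\
  (V_pull_in m E D Ac A L d eps0 < V -> pull_in m E D Ac A L d eps0 V).
Proof.
  destruct (beta_cmp_V_pull_in m E D Ac A L d eps0 V) as [Hlt [Heq Hgt]]; auto.
  destruct (scaled_params_pos m E D Ac A L d eps0 V) as [hal [hw hbe]]; auto.
  set (al := alpha_par E D L d) in *. set (be := beta_par E Ac A L d eps0 V) in *.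
  set (w := omega_par m E Ac L) in *.
  assert (Hper : V < V_pull_in m E D Ac A L d eps0 ->
                 exists x, periodic_solution m E D Ac A L d eps0 V x).
  { intro h. destruct (scaled_periodic_solution al be w hal hw (conj hbe (Hlt h)))
      as [y [Hy [p [hp Hp]]]].
    exists (fun t => d * y t). split; [now apply ivp_solution_on_scaled|].
    exists p. split; [exact hp | intro t; now rewrite Hp]. }
  split; [exact Hper | split].
  - intros [h | h]; [destruct (Hper h) as [x [Hx _]]; now exists x|].
    destruct (scaled_critical_solution al w hal hw) as [y Hy]. rewrite <- (Heq h) in Hy.
    exists (fun t => d * y t). now apply ivp_solution_on_scaled.
  - intro h. destruct (scaled_pull_in al be w hal hw (Hgt h)) as [lo [T [y [hT [Hy Hlim]]]]].
    exists lo, T, (fun t => d * y t). split; [exact hT | split; [now apply ivp_solution_on_scaled|]].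
    apply (filterlim_comp _ _ _ y (fun z => d * z) _ _ _ Hlim).
    replace (locally d) with (locally (d * 1)) by now rewrite Rmult_1_r.
    apply (@ex_derive_continuous R_AbsRing R_NormedModule). auto_derive. easy.
Qed.
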